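(* Consider Algorithm SAVIC (described in the context) run with heterogeneous data. Suppose each $f_m$ is $\mu$-strongly convex ($\mu\ge0$) and $L$-smooth, and there are constants $0<\alpha\le\Gamma$ with $\alpha I\preceq D^0\preceq\Gamma I$ and $\alpha I\preceq H^t\preceq\Gamma I$ for all $t$. Then for any $t$ with $t_p\le t<t_{p+1}$, $$-\frac2M\sum_{m=1}^M\langle\hat x_t-x_*,\nabla f_m(x_t^m)\rangle\le-2D_f(\hat x_t,x_* )-\frac{\mu}{\Gamma}\|\hat x_t-x_*\|^2_{\hat D^{t_p}}+\frac{L}{\alpha}V_t.$$
   Context: Problem: minimize $f(x)=\frac1M\sum_mf_m(x)$ over $\mathbb R^d$, $f_m(x)=\mathbb E_{z\sim\mathcal D_m}[f_m(x,z)]$, $x_*$ the solution; $\mu$-strong convexity and $L$-smoothness: $\frac{\mu}{2}\|x-y\|^2\le f_m(x)-f_m(y)-\langle\nabla f_m(y),x-y\rangle\le\frac{L}{2}\|x-y\|^2$. $D_f(x,y)=f(x)-f(y)-\langle\nabla f(y),x-y\rangle$. $\|x\|_A^2=\langle x,Ax\rangle$. Preconditioner: diagonal $D^t$ from diagonal $D^0,H^t$ via $(D^t)^2=\beta_t(D^{t-1})^2+(1-\beta_t)(H^t)^2$ or $D^t=\beta_tD^{t-1}+(1-\beta_t)H^t$, $\beta_t\in[0,1]$; $(\hat D^t)_{ii}=\max\{\alpha,|D^t_{ii}|\}$. Algorithm SAVIC: stepsize $\gamma>0$, $x_0^m=x_0$, synchronization times $t_0=0<t_1<\dots$; at $t=t_p$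 the matrix $\hat D^{t_p}$ is updated and used by all clients for $t_p\le t<t_{p+1}$; client $m$ samples $z_m\sim\mathcal D_m$ i.i.d. and sets $x_{t+1}^m=\frac1M\sum_j(x_t^j-\gamma(\hat D^{t_p})^{-1}\nabla f_j(x_t^j,z_j))$ if $t=t_p$ for some $p$, else $x_{t+1}^m=x_t^m-\gamma(\hat D^{t_p})^{-1}\nabla f_m(x_t^m,z_m)$. Notation: $\hat x_t=\frac1M\sum_mx_t^m$; $V_t=\frac1M\sum_m\|x_t^m-\hat x_t\|^2_{\hat D^{t_p}}$ for $t_p\le t<t_{p+1}$. *)

From HB Require Import structures.
From mathcomp Require Import all_boot all_order all_algebra.
From mathcomp Require Import reals.
Set Implicit Arguments. Unset Strict Implicit. Unset Printing Implicit Defensive.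
Import Order.TTheory GRing.Theory Num.Theory.
Local Open Scope ring_scope.

Section SAVIC.
Variables (R : realType) (d : nat).

Definition dot (x y : 'rV[R]_d) : R := (x *m y^T) 0 0.
Definition sqnorm (x : 'rV[R]_d) : R := dot x x.
Definition wnorm2 (A : 'M[R]_d) (x : 'rV[R]_d) : R := (x *m A *m x^T) 0 0.

Definition loewner_le (A B : 'M[R]_d) : Prop :=
  forall v : 'rV[R]_d, wnorm2 A v <= wnorm2 B v.

Definition upd_sq (beta : R) (Dprev H : 'M[R]_d) : 'M[R]_d :=
  \matrix_(i, j) (if i == j then
     Num.sqrt (beta * Dprev i i ^+ 2 + (1 - beta) * H i i ^+ 2) else 0).
Definition upd_lin (beta : R) (Dprev H : 'M[R]_d) : 'M[R]_d :=
  beta *: Dprev + (1 - beta) *: H.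

Definition Dhat (alpha : R) (D : 'M[R]_d) : 'M[R]_d :=
  \matrix_(i, j) (if i == j then Num.max alpha `|D i i| else 0).

End SAVIC.

From HB Require Import structures.
From mathcomp Require Import all_boot all_order all_algebra.
From mathcomp Require Import reals.
From mathcomp Require Import ring lra.
Import Order.TTheory GRing.Theory Num.Theory.
Set Implicit Arguments. Unset Strict Implicit.
Local Open Scope ring_scope.

(* Optimality of xstar and L-smoothness of the average f force grad f(xstar) = 0,
   so D_f(xhat, xstar) = f(xhat) - f(xstar).  For each client, L-smoothness between
   x_t^m and xhat and mu-strong convexity between x_t^m and xstar give
     -<xhat - xstar, grad f_m(x_t^m)>
       <= f_m(xstar) - f_m(xhat) + L/2 |x_t^m - xhat|^2 - mu/2 |x_t^m - xstar|^2.
   After averaging, Jensen's inequality |xhat - xstar|^2 <= 1/M sum_m |x_t^m - xstar|^2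
   handles the strong-convexity term.  Both update rules keep the diagonal of D^t
   in [alpha, Gamma], hence alpha |v|^2 <= |v|^2_Dhat <= Gamma |v|^2, which converts
   the Euclidean norms into Dhat-norms. *)

Section Inner.
Variables (R : realType) (d : nat).
Implicit Types (x y z v : 'rV[R]_d) (A : 'M[R]_d).

Lemma dotE x y : dot x y = \sum_i x 0 i * y 0 i.
Proof. by rewrite /dot mxE; apply: eq_bigr => i _; rewrite mxE. Qed.

Lemma dotC x y : dot x y = dot y x.
Proof. by rewrite !dotE; apply: eq_bigr => i _; rewrite mulrC. Qed.

Lemma dotDr x y z : dot x (y + z) = dot x y + dot x z.
Proof. by rewrite !dotE -big_split; apply: eq_bigr => i _; rewrite mxE mulrDr. Qed.

Lemma dotNr x y : dot x (- y) = - dot x y.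
Proof. by rewrite !dotE -sumrN; apply: eq_bigr => i _; rewrite mxE mulrN. Qed.

Lemma dotBr x y z : dot x (y - z) = dot x y - dot x z.
Proof. by rewrite dotDr dotNr. Qed.

Lemma dotZr x a y : dot x (a *: y) = a * dot x y.
Proof. by rewrite !dotE mulr_sumr; apply: eq_bigr => i _; rewrite mxE mulrCA. Qed.

Lemma dot_sumr (I : finType) x (y : I -> 'rV[R]_d) :
  dot x (\sum_m y m) = \sum_m dot x (y m).
Proof.
rewrite dotE; under eq_bigr => i _ do rewrite summxE mulr_sumr.
by rewrite exchange_big; apply: eq_bigr => m _; rewrite dotE.
Qed.

Lemma dotDl x y z : dot (y + z) x = dot y x + dot z x.
Proof. by rewrite dotC dotDr !(dotC x). Qed.

Lemma dotNl x y : dot (- y) x = - dot y x.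
Proof. by rewrite dotC dotNr dotC. Qed.

Lemma dotZl x a y : dot (a *: y) x = a * dot y x.
Proof. by rewrite dotC dotZr dotC. Qed.

Lemma dot_suml (I : finType) x (y : I -> 'rV[R]_d) :
  dot (\sum_m y m) x = \sum_m dot (y m) x.
Proof. by rewrite dotC dot_sumr; apply: eq_bigr => m _; rewrite dotC. Qed.

Lemma dot0l x : dot 0 x = 0.
Proof. by rewrite dotE big1 // => i _; rewrite mxE mul0r. Qed.

Lemma sqnorm_ge0 v : 0 <= sqnorm v.
Proof. by rewrite /sqnorm dotE; apply: sumr_ge0 => i _; rewrite -expr2 sqr_ge0. Qed.

Lemma sqnorm_eq0 v : (sqnorm v == 0) = (v == 0).
Proof.
apply/idP/eqP => [|->]; last by rewrite /sqnorm dot0l.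
rewrite /sqnorm dotE => /eqP /psumr_eq0P v0; apply/matrixP => i j.
rewrite (ord1 i) mxE; apply/eqP; rewrite -sqrf_eq0 expr2 v0 //.
by move=> k _; rewrite -expr2 sqr_ge0.
Qed.

Lemma sqnormBC x y : sqnorm (x - y) = sqnorm (y - x).
Proof. by rewrite -opprB /sqnorm dotNl dotNr opprK. Qed.

Lemma sqnormD x y : sqnorm (x + y) = sqnorm x + 2 * dot x y + sqnorm y.
Proof. rewrite /sqnorm dotDl !dotDr (dotC y x); ring. Qed.

Lemma wnorm2_diag A v : is_diag_mx A -> wnorm2 A v = \sum_i A i i * v 0 i ^+ 2.
Proof.
move=> /is_diag_mxP A_diag; rewrite /wnorm2 mxE; apply: eq_bigr => k _.
rewrite !mxE (bigD1 k) //= big1 ?addr0; first by ring.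
by move=> j jk; rewrite A_diag ?mulr0 // eq_sym.
Qed.

Lemma wnorm2_delta A i : wnorm2 A (delta_mx 0 i) = A i i.
Proof. by rewrite /wnorm2 -rowE trmx_delta -colE !mxE. Qed.

Lemma loewner_scalar_entry A a b i :
  loewner_le a%:M A /\ loewner_le A b%:M -> a <= A i i <= b.
Proof.
case=> /(_ (delta_mx 0 i)) aA /(_ (delta_mx 0 i)) Ab.
by move: aA Ab; rewrite !wnorm2_delta !mxE eqxx !mulr1n => -> ->.
Qed.

Lemma wnorm2_diag_bounds A a b v : is_diag_mx A -> (forall i, a <= A i i <= b) ->
  a * sqnorm v <= wnorm2 A v <= b * sqnorm v.
Proof.
move=> A_diag A_bnd; rewrite wnorm2_diag // /sqnorm dotE !mulr_sumr.
apply/andP; split; apply: ler_sum => i _; rewrite -expr2;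
  by apply: ler_wpM2r; [exact: sqr_ge0 | case/andP: (A_bnd i)].
Qed.

Lemma sqnorm_mean_le (M : nat) (x : 'I_M -> 'rV[R]_d) y : (0 < M)%N ->
  sqnorm (M%:R^-1 *: \sum_m x m - y) <= \sum_m sqnorm (x m - y) / M%:R.
Proof.
move=> M_gt0; set xh := M%:R^-1 *: _.
have M_neq0 : M%:R != 0 :> R by rewrite pnatr_eq0 -lt0n.
have centered : \sum_m (x m - xh) = 0.
  by rewrite sumrB sumr_const card_ord -scaler_nat scalerA mulfV // scale1r subrr.
have split m : sqnorm (x m - y) =
    sqnorm (x m - xh) + 2 * dot (x m - xh) (xh - y) + sqnorm (xh - y).
  by rewrite -sqnormD addrA subrK.
rewrite -mulr_suml ler_pdivlMr ?ltr0n //.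
under eq_bigr do rewrite split.
rewrite !big_split /= -mulr_sumr -dot_suml centered dot0l mulr0 addr0.
by rewrite sumr_const card_ord mulr_natr lerDr sumr_ge0 // => m _; apply: sqnorm_ge0.
Qed.

Lemma sqnorm_le_wnorm2 A (a c : R) v : 0 < a ->
  a * sqnorm v <= wnorm2 A v -> 0 <= c \/ v = 0 -> c * sqnorm v <= c / a * wnorm2 A v.
Proof.
move=> a_gt0 av [c_ge0 | ->]; last by rewrite /wnorm2 !mul0mx mxE /sqnorm dot0l !mulr0.
by rewrite -mulrA ler_wpM2l // ler_pdivlMl.
Qed.

Lemma wnorm2_le_sqnorm A (b c : R) v : 0 < b -> 0 <= c ->
  wnorm2 A v <= b * sqnorm v -> c / b * wnorm2 A v <= c * sqnorm v.
Proof. by move=> b_gt0 c_ge0 vb; rewrite -mulrA ler_wpM2l // ler_pdivrMl. Qed.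

End Inner.

Section Preconditioner.
Variables (R : realType) (d : nat) (a b : R).
Hypothesis a_ge0 : 0 <= a.
Implicit Types (D H : 'M[R]_d) (beta : R).

Definition precond_seq (sqrule : bool) (beta : nat -> R) (D H : nat -> 'M[R]_d) : Prop :=
  forall t, D t.+1 = if sqrule then upd_sq (beta t.+1) (D t) (H t.+1)
                     else upd_lin (beta t.+1) (D t) (H t.+1).

Lemma upd_sq_bounds beta D H i : 0 <= beta <= 1 ->
  a <= D i i <= b -> a <= H i i <= b -> a <= upd_sq beta D H i i <= b.
Proof.
move=> /andP[b0 b1] aDb aHb.
have sqr_bounds u : a <= u <= b -> a ^+ 2 <= u ^+ 2 <= b ^+ 2.
  move=> /andP[au ub]; have u0 := le_trans a_ge0 au.
  by rewrite !ler_sqr ?nnegrE ?au ?ub // (le_trans u0).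
have b_ge0 : 0 <= b by case/andP: aDb => aD Db; rewrite (le_trans a_ge0) // (le_trans aD).
case/andP: (sqr_bounds _ aDb) (sqr_bounds _ aHb) => aD2 D2b /andP[aH2 H2b].
rewrite mxE eqxx -(ger0_norm a_ge0) -(ger0_norm b_ge0) -!sqrtr_sqr.
by rewrite !ler_sqrt ?sqr_ge0 //; [apply/andP; split | ]; nra.
Qed.

Lemma upd_lin_bounds beta D H i : 0 <= beta <= 1 ->
  a <= D i i <= b -> a <= H i i <= b -> a <= upd_lin beta D H i i <= b.
Proof.
move=> /andP[b0 b1] /andP[aD Db] /andP[aH Hb].
by rewrite !mxE; apply/andP; split; nra.
Qed.

Lemma precond_diag_bounds (sqrule : bool) (beta : nat -> R) (D H : nat -> 'M[R]_d) :
  (forall t, 0 <= beta t <= 1) ->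
  (forall i, a <= D 0%N i i <= b) -> (forall t i, a <= H t i i <= b) ->
  precond_seq sqrule beta D H ->
  forall t i, a <= D t i i <= b.
Proof.
move=> beta01 D0 Hab Drec; elim=> // t IH i; rewrite (Drec t).
by case: ifP => _; [apply: upd_sq_bounds | apply: upd_lin_bounds].
Qed.

Lemma Dhat_diag D : is_diag_mx (Dhat a D).
Proof. by apply/is_diag_mxP => i j ij; rewrite mxE ifN. Qed.

Lemma Dhat_id_entry D i : a <= D i i -> Dhat a D i i = D i i.
Proof.
by move=> aD; rewrite mxE eqxx ger0_norm ?max_r // (le_trans a_ge0).
Qed.

Lemma Dhat_precond_wnorm2_bounds (sqrule : bool) (beta : nat -> R) (D H : nat -> 'M[R]_d) :
  (forall t, 0 <= beta t <= 1) ->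
  loewner_le a%:M (D 0%N) /\ loewner_le (D 0%N) b%:M ->
  (forall t, loewner_le a%:M (H t) /\ loewner_le (H t) b%:M) ->
  precond_seq sqrule beta D H ->
  forall t v, a * sqnorm v <= wnorm2 (Dhat a (D t)) v <= b * sqnorm v.
Proof.
move=> beta01 D0 Hab Drec t v; apply: wnorm2_diag_bounds; first exact: Dhat_diag.
move=> i; have /andP[aD Db] := precond_diag_bounds beta01
  (fun i => loewner_scalar_entry i D0) (fun t i => loewner_scalar_entry i (Hab t)) Drec t i.
by rewrite Dhat_id_entry ?aD ?Db.
Qed.

End Preconditioner.

Section Smoothness.
Variables (R : realType) (d : nat).
Implicit Types (x y z v g : 'rV[R]_d).

Lemma grad_eq0_at_min (F : 'rV[R]_d -> R) g x (L : R) :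
  (forall y, F x <= F y) ->
  (forall h, F (x + h) - F x - dot g h <= L / 2 * sqnorm h) -> g = 0.
Proof.
move=> x_min smooth; apply/eqP; rewrite -sqnorm_eq0 eq_le sqnorm_ge0 andbT.
(* a step of length u against g with L u < 1 would decrease F unless g = 0 *)
pose u := (`|L| + 1)^-1.
have u_gt0 : 0 < u by rewrite invr_gt0 ltr_wpDl.
have Lu_lt1 : L * u < 1.
  by rewrite ltr_pdivrMr ?ltr_wpDl // mul1r (le_lt_trans (ler_norm L)) ?ltrDl.
have := smooth (- (u *: g)); have := x_min (x + - (u *: g)).
rewrite dotNr dotZr /sqnorm dotNl dotNr opprK dotZl dotZr -/(sqnorm g) => Fx Fxh.
have uq_ge0 := mulr_ge0 (ltW u_gt0) (sqnorm_ge0 g).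
have uq_le0 : u * sqnorm g <= 0 by nra.
by rewrite -(pmulr_rle0 _ u_gt0).
Qed.

Lemma three_point (fm : 'rV[R]_d -> R) g x y z (mu L : R) :
  fm z - fm x - dot g (z - x) <= L / 2 * sqnorm (z - x) ->
  mu / 2 * sqnorm (y - x) <= fm y - fm x - dot g (y - x) ->
  - dot (z - y) g <= fm y - fm z + L / 2 * sqnorm (x - z) - mu / 2 * sqnorm (x - y).
Proof.
move=> smooth strong; rewrite dotC (sqnormBC x z) (sqnormBC x y).
rewrite !dotBr in smooth strong *; lra.
Qed.

Lemma ler_sqnorm_ge0_or_eq0 (mu L : R) v :
  0 <= mu -> mu * sqnorm v <= L * sqnorm v -> 0 <= L \/ v = 0.
Proof.
move=> mu_ge0 muL; case: (lerP 0 L) => L0; [by left | right].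
apply/eqP; rewrite -sqnorm_eq0 eq_le sqnorm_ge0 andbT.
have := sqnorm_ge0 v; nra.
Qed.

End Smoothness.

Section Clients.
Variables (R : realType) (d M : nat) (f : 'I_M -> 'rV[R]_d -> R).
Variables (gradf : 'I_M -> 'rV[R]_d -> 'rV[R]_d) (mu L : R).
Hypothesis mu_ge0 : 0 <= mu.
Hypothesis strong : forall m x y,
  mu / 2 * sqnorm (x - y) <= f m x - f m y - dot (gradf m y) (x - y).
Hypothesis smooth : forall m x y,
  f m x - f m y - dot (gradf m y) (x - y) <= L / 2 * sqnorm (x - y).

Lemma mean_smooth : (0 < M)%N ->
  forall x y, \sum_m f m x / M%:R - \sum_m f m y / M%:R
              - dot (M%:R^-1 *: \sum_m gradf m y) (x - y) <= L / 2 * sqnorm (x - y).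
Proof.
move=> M_gt0 x y; rewrite dotZl dot_suml mulr_sumr -!sumrB.
apply: le_trans (_ : \sum_(m < M) L / 2 * sqnorm (x - y) / M%:R <= _).
  apply: ler_sum => m _; have := smooth m x y.
  have : 0 <= M%:R^-1 :> R by rewrite invr_ge0 ler0n.
  nra.
by rewrite sumr_const card_ord -(mulr_natr (_ / M%:R)) divfK // pnatr_eq0 -lt0n.
Qed.

Lemma client_descent m y (A : 'M[R]_d) (a : R) xm xh : 0 < a ->
  a * sqnorm (xm - xh) <= wnorm2 A (xm - xh) ->
  - 2 * dot (xh - y) (gradf m xm)
  <= 2 * (f m y - f m xh) + L / a * wnorm2 A (xm - xh) - mu * sqnorm (xm - y).
Proof.
move=> a_gt0 aA.
(* L is not assumed nonnegative, but L < 0 forces every vector to vanish *)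
have L_case : 0 <= L \/ xm - xh = 0.
  apply: (ler_sqnorm_ge0_or_eq0 mu_ge0).
  by have := strong m (xm - xh) 0; have := smooth m (xm - xh) 0; rewrite subr0; lra.
have := sqnorm_le_wnorm2 a_gt0 aA L_case.
have := three_point (smooth m xh xm) (strong m y xm).
lra.
Qed.

End Clients.

Unset Implicit Arguments. Set Strict Implicit.

Theorem lemma6
  (R : realType) (d M : nat) (HM : (0 < M)%N)
  (f : 'I_M -> 'rV[R]_d -> R) (gradf : 'I_M -> 'rV[R]_d -> 'rV[R]_d)
  (Z : Type) (sgrad : 'I_M -> 'rV[R]_d -> Z -> 'rV[R]_d)
  (mu L alpha Gamma : R)
  (Hmu : 0 <= mu)
  (Hsc : forall m x y, mu / 2 * sqnorm (x - y)
                       <= f m x - f m y - dot (gradf m y) (x - y))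
  (Hsm : forall m x y, f m x - f m y - dot (gradf m y) (x - y)
                       <= L / 2 * sqnorm (x - y))
  (xstar : 'rV[R]_d)
  (Hxstar : forall x, \sum_(m < M) f m xstar / M%:R <= \sum_(m < M) f m x / M%:R)
  (Halpha : 0 < alpha) (HaG : alpha <= Gamma)
  (sqrule : bool) (beta : nat -> R) (Hbeta : forall t, 0 <= beta t <= 1)
  (Dm Hm : nat -> 'M[R]_d)
  (HD0diag : is_diag_mx (Dm 0%N))
  (HD0 : loewner_le (alpha%:M) (Dm 0%N) /\ loewner_le (Dm 0%N) (Gamma%:M))
  (HHdiag : forall t, is_diag_mx (Hm t))
  (HH : forall t, loewner_le (alpha%:M) (Hm t) /\ loewner_le (Hm t) (Gamma%:M))
  (HDrec : forall t, Dm t.+1 = if sqrule then upd_sq (beta t.+1) (Dm t) (Hm t.+1)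
                                else upd_lin (beta t.+1) (Dm t) (Hm t.+1))
  (gamma : R) (Hgamma : 0 < gamma)
  (tp : nat -> nat) (Htp0 : tp 0%N = 0%N) (Htpinc : forall p, (tp p < tp p.+1)%N)
  (z : nat -> 'I_M -> Z)
  (x0 : 'rV[R]_d) (x : nat -> 'I_M -> 'rV[R]_d)
  (Hx0 : forall m, x 0%N m = x0)
  (Hxrec : forall p t m, (tp p <= t < tp p.+1)%N ->
     x t.+1 m =
       if t == tp p then
         M%:R^-1 *: \sum_(j < M) (x t j - gamma *: (sgrad j (x t j) (z t j) *m invmx (Dhat alpha (Dm (tp p)))))
       else x t m - gamma *: (sgrad m (x t m) (z t m) *m invmx (Dhat alpha (Dm (tp p)))))
  (p t : nat) (Ht : (tp p <= t < tp p.+1)%N) :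
  let F := fun y => \sum_(m < M) f m y / M%:R in
  let gradF := fun y => M%:R^-1 *: \sum_(m < M) gradf m y in
  let Df := fun y w => F y - F w - dot (gradF w) (y - w) in
  let xhat := M%:R^-1 *: \sum_(m < M) x t m in
  let Dh := Dhat alpha (Dm (tp p)) in
  let V := \sum_(m < M) wnorm2 Dh (x t m - xhat) / M%:R in
  - (2 / M%:R) * \sum_(m < M) dot (xhat - xstar) (gradf m (x t m))
  <= - 2 * Df xhat xstar - mu / Gamma * wnorm2 Dh (xhat - xstar) + L / alpha * V.
Proof.
cbv zeta; set xhat := M%:R^-1 *: _; set Dh := Dhat _ _.
have Dh_bnd v : alpha * sqnorm v <= wnorm2 Dh v <= Gamma * sqnorm v.
  exact: (Dhat_precond_wnorm2_bounds (ltW Halpha) Hbeta HD0 HH HDrec).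
have gradF0 : M%:R^-1 *: \sum_(m < M) gradf m xstar = 0.
  apply: (grad_eq0_at_min (L := L) Hxstar) => h.
  by have := mean_smooth Hsm HM (xstar + h) xstar; rewrite (addrC xstar h) addrK.
rewrite gradF0 dot0l subr0.
have per_client m : - (2 / M%:R) * dot (xhat - xstar) (gradf m (x t m)) <=
    2 * (f m xstar / M%:R - f m xhat / M%:R)
    + L / alpha * (wnorm2 Dh (x t m - xhat) / M%:R)
    - mu * (sqnorm (x t m - xstar) / M%:R).
  have := client_descent Hmu Hsc Hsm m xstar Halpha (proj1 (andP (Dh_bnd (x t m - xhat)))).
  have : 0 <= M%:R^-1 :> R by rewrite invr_ge0 ler0n.
  nra.
rewrite mulr_sumr; apply: le_trans (ler_sum _ (fun m _ => per_client m)) _.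
rewrite sumrB big_split /= -!mulr_sumr sumrB.
have mean_term := ler_wpM2l Hmu (sqnorm_mean_le (x t) xstar HM).
have mu_term := wnorm2_le_sqnorm (lt_le_trans Halpha HaG) Hmu
  (proj2 (andP (Dh_bnd (xhat - xstar)))).
lra.
Qed.
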